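(* Let $\mathcal{G}$ be an effective ample groupoid. (1) If $|\operatorname{Orb}_{\mathcal{G}}(x)|\ge2$ for every $x\in\mathcal{G}^{(0)}$, then $\llbracket\mathcal{G}\rrbracket$ covers $\mathcal{G}$. (2) If $|\operatorname{Orb}_{\mathcal{G}}(x)|\ge3$ for every $x\in\mathcal{G}^{(0)}$, then $\mathsf{D}(\llbracket\mathcal{G}\rrbracket)$ covers $\mathcal{G}$.
   Context: Étale groupoid: range map $r(g)=gg^{-1}$ (and source $s(g)=g^{-1}g$) a local homeomorphism; ample: étale with $\mathcal{G}^{(0)}$ Hausdorff having a basis of compact open sets; effective: interior of $\{g:s(g)=r(g)\}$ equals $\mathcal{G}^{(0)}$. $\operatorname{Orb}_{\mathcal{G}}(x)=\{r(g):s(g)=x\}$. A full bisection is an open $U\subseteq\mathcal{G}$ with $s|_U,r|_U$ injective and $s(U)=r(U)=\mathcal{G}^{(0)}$; $\pi_U=r|_U\circ(s|_U)^{-1}$. $\llbracket\mathcal{G}\rrbracket$ is the group of all $\pi_U$ for full bisections $U$ with compact support (closure of moved points); $\mathsf{D}(\llbracket\mathcal{G}\rrbracket)$ its commutator subgroup. A subgroup $\Gamma\le\llbracket\mathcal{G}\rrbracket$ covers $\mathcal{G}$ if for every $g\in\mathcal{G}$ there is a full bisection $U$ with $g\in U$ and $\pi_U\in\Gamma$. *)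

From mathcomp Require Import all_boot all_classical topology.
Set Implicit Arguments.
Unset Strict Implicit.
Unset Printing Implicit Defensive.
Local Open Scope classical_set_scope.

Section Groupoids.
Variable G : topologicalType.
Variable comp : G -> G -> Prop.
Variable mul : G -> G -> G.       (* product, meaningful on G^(2) *)
Variable inv : G -> G.

Record is_groupoid : Prop := {
  gpd_assoc : forall x y z, comp x y -> comp y z ->
     [/\ comp (mul x y) z, comp x (mul y z) & mul (mul x y) z = mul x (mul y z)];
  gpd_invK : forall x, inv (inv x) = x;
  gpd_comp_inv : forall x, comp (inv x) x;
  gpd_invl : forall x y, comp x y -> mul (inv x) (mul x y) = y;
  gpd_invr : forall x y, comp y x -> mul (mul y x) (inv x) = y }.

Record is_topological_groupoid : Prop := {
  tgpd_groupoid : is_groupoid;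
  tgpd_inv_cont : continuous inv;
  tgpd_mul_cont : {within [set p : G * G | comp p.1 p.2],
                    continuous (fun p : G * G => mul p.1 p.2)} }.

Definition src (g : G) : G := mul (inv g) g.
Definition rng (g : G) : G := mul g (inv g).

Definition unit_space : set G := [set x | exists g, x = src g].

Definition relopen (A S : set G) : Prop := exists V, open V /\ S = V `&` A.

Definition local_homeo_into (A : set G) (f : G -> G) : Prop :=
  (forall g, A (f g)) /\
  forall g, exists U, [/\ open U, U g, {in U &, injective f},
     {within U, continuous f} &
     forall W, open W -> W `<=` U -> relopen A (f @` W)].

Definition etale : Prop := local_homeo_into unit_space rng.

Definition unit_space_hausdorff : Prop :=
  forall x y, unit_space x -> unit_space y -> x <> y ->
    exists U V, [/\ open U, open V, U x, V y & U `&` V `&` unit_space = set0].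

Definition unit_space_compact_open_basis : Prop :=
  forall x V, unit_space x -> open V -> V x ->
    exists K, [/\ K `<=` unit_space, relopen unit_space K, compact K, K x & K `<=` V].

Definition ample : Prop :=
  [/\ etale, unit_space_hausdorff & unit_space_compact_open_basis].

Definition isotropy : set G := [set g | src g = rng g].

Definition effective : Prop := interior isotropy = unit_space.

Definition gorbit (x : G) : set G := [set y | exists g, src g = x /\ rng g = y].

Definition full_bisection (U : set G) : Prop :=
  [/\ open U, {in U &, injective src}, {in U &, injective rng},
      src @` U = unit_space & rng @` U = unit_space].

(* f is the homeomorphism pi_U = r|_U o (s|_U)^-1 of G^(0),
   extended by the identity outside G^(0) *)
Definition pi_of (U : set G) (f : G -> G) : Prop :=
  forall x, (unit_space x -> exists u, [/\ U u, src u = x & f x = rng u]) /\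
            (~ unit_space x -> f x = x).

Definition support (f : G -> G) : set G :=
  closure [set x | unit_space x /\ f x <> x] `&` unit_space.

Definition full_group : set (G -> G) :=
  [set f | exists U, [/\ full_bisection U, pi_of U f & compact (support f)]].

Definition gen_subgroup (S : set (G -> G)) : set (G -> G) :=
  [set f | forall H : set (G -> G),
     S `<=` H -> H id ->
     (forall a b, H a -> H b -> H (a \o b)) ->
     (forall a a', H a -> cancel a a' -> cancel a' a -> H a') -> H f].

Definition commutators (Gam : set (G -> G)) : set (G -> G) :=
  [set c | exists a b a' b', [/\ Gam a, Gam b,
     cancel a a' /\ cancel a' a, cancel b b' /\ cancel b' b &
     c = a' \o b' \o a \o b]].

Definition derived (Gam : set (G -> G)) : set (G -> G) :=
  gen_subgroup (commutators Gam).

Definition covers (Gam : set (G -> G)) : Prop :=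
  forall g, exists U f, [/\ full_bisection U, U g, pi_of U f & Gam f].

End Groupoids.

From Pilot Require Import Defs.
From mathcomp Require Import all_boot all_classical topology.
Local Open Scope classical_set_scope.

(* An arrow [g] with [s g <> r g] lies in a compact open bisection [V] with
   [s(V)] and [r(V)] disjoint (Hausdorffness of the unit space and its basis of
   compact open sets), and [V ∪ V^-1 ∪ (G^(0) \ (s(V) ∪ r(V)))] is a full
   bisection whose [pi] is an involution with compact support.  If some [k]
   with source [s g] has [r k] distinct from [s g] and [r g], choose such
   [V ∋ g] and [W ∋ k] with [r k] outside [s(V) ∪ r(V)]: the commutator
   [a b a b] of the two involutions is the [pi] of a product of four full
   bisections containing [g = g k^-1 r(k) k].  Finally an isotropic [g] is the
   product [h^-1 (h g)] of two non-isotropic arrows as soon as some [h] with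
   source [s g] has [r h <> s g], and both covering properties are stable under
   products. *)

Lemma open_from_nbhs {T : topologicalType} (A : set T) :
  (forall x, A x -> exists2 B, open_nbhs x B & B `<=` A) -> open A.
Proof. by move=> AB; rewrite openE => x /AB; rewrite /interior nbhsE. Qed.

Lemma distinct3_avoid2 {T : Type} (y z : T) {y1 y2 y3 : T} :
  y1 <> y2 -> y1 <> y3 -> y2 <> y3 ->
  [\/ y1 <> y /\ y1 <> z, y2 <> y /\ y2 <> z | y3 <> y /\ y3 <> z].
Proof.
move=> n12 n13 n23.
have [e1|e1] := pselect (y1 = y); have [f1|f1] := pselect (y1 = z);
have [e2|e2] := pselect (y2 = y); have [f2|f2] := pselect (y2 = z);
  by [apply: Or31 | apply: Or32 | apply: Or33; split=> ?; congruence].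
Qed.

Section TopologicalGroupoid.
#[local] Set Implicit Arguments.
#[local] Unset Strict Implicit.

Variables (G : topologicalType) (comp : G -> G -> Prop).
Variables (mul : G -> G -> G) (inv : G -> G).
Hypothesis HG : is_topological_groupoid comp mul inv.

Local Notation s := (src mul inv).
Local Notation r := (rng mul inv).
Local Notation G0 := (unit_space mul inv).

Let groupoid : is_groupoid comp mul inv. Proof. by case: HG. Qed.

Lemma invK x : inv (inv x) = x. Proof. by case: groupoid. Qed.
Lemma comp_invl x : comp (inv x) x. Proof. by case: groupoid. Qed.
Lemma comp_invr x : comp x (inv x).
Proof. by have := comp_invl (inv x); rewrite invK. Qed.

Lemma comp_mulA x y z : comp x y -> comp y z ->
  [/\ comp (mul x y) z, comp x (mul y z) & mul (mul x y) z = mul x (mul y z)].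
Proof. by case: groupoid => assoc *; apply: assoc. Qed.
Lemma mulKg x y : comp x y -> mul (inv x) (mul x y) = y.
Proof. by case: groupoid => _ _ _ mulK *; apply: mulK. Qed.
Lemma mulgK x y : comp y x -> mul (mul y x) (inv x) = y.
Proof. by case: groupoid => _ _ _ _ mulK *; apply: mulK. Qed.

Lemma src_inv x : s (inv x) = r x. Proof. by rewrite /src /rng invK. Qed.
Lemma rng_inv x : r (inv x) = s x. Proof. by rewrite /src /rng invK. Qed.

Lemma comp_src x : comp x (s x).
Proof. by case: (comp_mulA (comp_invr x) (comp_invl x)). Qed.
Lemma comp_rng x : comp (r x) x.
Proof. by case: (comp_mulA (comp_invr x) (comp_invl x)). Qed.
Lemma mul_rngl x : mul (r x) x = x.
Proof. by have := mulgK (comp_invr x); rewrite invK. Qed.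
Lemma mul_srcr x : mul x (s x) = x.
Proof. by have := mulKg (comp_invl x); rewrite invK. Qed.

Lemma compP x y : comp x y <-> s x = r y.
Proof.
split=> [cxy|sxry].
- case: (comp_mulA cxy (comp_invr y)) => _ cx_yy e; rewrite mulgK // in e.
  by rewrite /src {2}e mulKg.
- have := comp_src x; rewrite sxry => cx_ry.
  by case: (comp_mulA cx_ry (comp_rng y)) => _; rewrite mul_rngl.
Qed.

Lemma src_mul x y : comp x y -> s (mul x y) = s y.
Proof.
move=> cxy; case: (comp_mulA cxy (comp_invr y)) => /compP + _ _.
by rewrite rng_inv.
Qed.

Lemma rng_mul x y : comp x y -> r (mul x y) = r x.
Proof.
move=> cxy; case: (comp_mulA (comp_invl x) cxy) => _ /compP + _.
by rewrite src_inv => <-.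
Qed.

Lemma src_src x : s (s x) = s x. Proof. exact: src_mul (comp_invl x). Qed.
Lemma rng_src x : r (s x) = s x.
Proof. by rewrite {1}/src rng_mul ?rng_inv //; apply: comp_invl. Qed.

Lemma unit_src x : G0 (s x). Proof. by exists x. Qed.
Lemma unit_rng x : G0 (r x). Proof. by exists (inv x); rewrite src_inv. Qed.
Lemma src_unit z : G0 z -> s z = z. Proof. by case=> x ->; rewrite src_src. Qed.
Lemma rng_unit z : G0 z -> r z = z. Proof. by case=> x ->; rewrite rng_src. Qed.
Lemma unit_of_rng_id z : r z = z -> G0 z.
Proof. by move=> <-; apply: unit_rng. Qed.

Lemma inv_unit z : G0 z -> inv z = z.
Proof.
move=> Gz; rewrite -{1}(mul_srcr (inv z)) src_inv rng_unit //.
exact: src_unit.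
Qed.

Lemma mulgVK w v : s w = s v -> mul (mul w (inv v)) v = w.
Proof.
move=> swv; have cwv : comp w (inv v) by apply/compP; rewrite rng_inv.
by have := mulgK cwv; rewrite invK.
Qed.

Lemma isotropic_factorization g h : s g = r g -> s h = s g -> r h <> s g ->
  [/\ s (inv h) <> r (inv h), s (mul h g) <> r (mul h g),
      comp (inv h) (mul h g) & mul (inv h) (mul h g) = g].
Proof.
move=> iso_g shg rhg; have chg : comp h g by apply/compP; rewrite shg.
split.
- by rewrite src_inv rng_inv shg.
- by rewrite src_mul // rng_mul //; apply: nesym.
- by apply/compP; rewrite src_inv rng_mul.
- exact: mulKg.
Qed.

Lemma open_preimage_inv (N : set G) : open N -> open (inv @^-1` N).
Proof. by case: HG => _ /continuousP inv_open _; apply: inv_open. Qed.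

Lemma mul_nbhs a b (N : set G) : comp a b -> open N -> N (mul a b) ->
  exists P Q, [/\ open P, open Q, P a, Q b &
    forall x y, P x -> Q y -> comp x y -> N (mul x y)].
Proof.
move=> cab oN Nab; case: HG => _ _ /subspace_continuousP mul_cont.
have [[A B] /= [nA nB] ABN] := mul_cont (a, b) cab N (open_nbhs_nbhs (conj oN Nab)).
move: nA nB; rewrite !nbhsE => -[P [oP Pa] PA] [Q [oQ Qb] QB].
exists P, Q; split=> // x y Px Qy cxy.
exact: (ABN (x, y) (conj (PA _ Px) (QB _ Qy)) cxy).
Qed.

Lemma open_preimage_src (N : set G) : open N -> open (s @^-1` N).
Proof.
move=> oN; apply: open_from_nbhs => x Nsx.
have [P [Q [oP oQ Px Qx PQN]]] := mul_nbhs (comp_invl x) oN Nsx.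
exists (inv @^-1` P `&` Q).
  by split=> //; apply: openI => //; apply: open_preimage_inv.
by move=> w [Pw Qw]; apply: PQN => //; apply: comp_invl.
Qed.

Lemma open_preimage_rng (N : set G) : open N -> open (r @^-1` N).
Proof.
move=> oN; apply: open_from_nbhs => x Nrx.
have [P [Q [oP oQ Px Qx PQN]]] := mul_nbhs (comp_invr x) oN Nrx.
exists (P `&` inv @^-1` Q).
  by split=> //; apply: openI => //; apply: open_preimage_inv.
by move=> w [Pw Qw]; apply: PQN => //; apply: comp_invr.
Qed.

Lemma compact_src_image (V : set G) : compact V -> compact (s @` V).
Proof.
apply: continuous_compact; apply: continuous_subspaceT.
by apply/continuousP => A; apply: open_preimage_src.
Qed.

Lemma compact_rng_image (V : set G) : compact V -> compact (r @` V).
Proof.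
apply: continuous_compact; apply: continuous_subspaceT.
by apply/continuousP => A; apply: open_preimage_rng.
Qed.

Definition inj_on (B : set G) (f : G -> G) : Prop :=
  forall x y, B x -> B y -> f x = f y -> x = y.

Definition open_bisection (B : set G) : Prop := [/\ open B, inj_on B s & inj_on B r].

Definition compact_open_bisection (B : set G) : Prop := open_bisection B /\ compact B.

Lemma inj_onS (A B : set G) f : A `<=` B -> inj_on B f -> inj_on A f.
Proof. by move=> AB iB x y Ax Ay; apply: iB; apply: AB. Qed.

Lemma inj_on_setU (A B : set G) f : inj_on A f -> inj_on B f ->
  (forall x y, A x -> B y -> f x <> f y) -> inj_on (A `|` B) f.
Proof.
move=> iA iB AB x y [Ax|Bx] [Ay|By] fxy; first exact: iA.
- by case: (AB _ _ Ax By).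
- by case: (AB _ _ Ay Bx).
- exact: iB.
Qed.

Lemma full_bisectionP U :
  full_bisection mul inv U <-> [/\ open_bisection U, s @` U = G0 & r @` U = G0].
Proof.
split=> [[oU iS iR sU rU]|[[oU iS iR] sU rU]]; split=> //.
- by split=> // x y Ux Uy; [apply: iS | apply: iR]; rewrite ?in_setE.
- by move=> x y; rewrite !in_setE; apply: iS.
- by move=> x y; rewrite !in_setE; apply: iR.
Qed.

Lemma full_bisection_inv_closed U : open U -> inj_on U s -> s @` U = G0 ->
  (forall u, U u -> U (inv u)) -> full_bisection mul inv U.
Proof.
move=> oU iS sU Uinv; apply/full_bisectionP; split=> //.
- split=> // x y Ux Uy; rewrite -!src_inv => sxy.
  by rewrite -(invK x) -(invK y) (iS _ _ (Uinv _ Ux) (Uinv _ Uy) sxy).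
- rewrite -sU; apply/seteqP; split=> _ [u Uu <-].
  + by exists (inv u); [apply: Uinv | rewrite src_inv].
  + by exists (inv u); [apply: Uinv | rewrite rng_inv].
Qed.

Lemma units_disjoint_notin X Y t : X `&` Y `&` G0 = set0 -> X t -> Y t -> ~ G0 t.
Proof. by move=> XY0 Xt Yt Gt; have : (X `&` Y `&` G0) t by []; rewrite XY0. Qed.

Lemma units_disjointS X Y X' Y' : X' `<=` X -> Y' `<=` Y ->
  X `&` Y `&` G0 = set0 -> X' `&` Y' `&` G0 = set0.
Proof.
move=> XX YY XY0; apply/seteqP; split=> // t [[/XX Xt /YY Yt] Gt].
exact: units_disjoint_notin XY0 Xt Yt Gt.
Qed.

Hypothesis Hample : ample mul inv.

Lemma rng_chart g : exists U, [/\ open U, U g, inj_on U r &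
  forall W, open W -> W `<=` U -> relopen G0 (r @` W)].
Proof.
case: Hample => -[_ /(_ g) [U [oU Ug iU _ rU]]] _ _; exists U; split=> //.
by move=> x y Ux Uy; apply: iU; rewrite in_setE.
Qed.

Lemma unit_space_open : open G0.
Proof.
apply: open_from_nbhs => z Gz; have [U [oU Uz iU _]] := rng_chart z.
exists (U `&` r @^-1` U).
  by split; [apply: openI => //; apply: open_preimage_rng | split; rewrite //= rng_unit].
move=> t [Ut Urt]; apply: unit_of_rng_id; apply: iU => //.
exact: rng_unit (unit_rng t).
Qed.

Lemma relopen_unit_space_open S : relopen G0 S -> open S.
Proof. by case=> V [oV ->]; apply: openI => //; apply: unit_space_open. Qed.

Lemma open_rng_image W : open W -> open (r @` W).
Proof.
move=> oW; apply: open_from_nbhs => _ [w Ww <-].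
have [U [oU Uw _ rU]] := rng_chart w.
exists (r @` (W `&` U)); last by move=> _ [t [Wt _] <-]; exists t.
split; last by exists w.
by apply: relopen_unit_space_open; apply: rU; [apply: openI | move=> t []].
Qed.

Lemma open_src_image W : open W -> open (s @` W).
Proof.
move=> oW; have -> : s @` W = r @` (inv @^-1` W).
  apply/seteqP; split=> _ [t Wt <-].
  - by exists (inv t); rewrite /= ?invK // rng_inv.
  - by exists (inv t) => //; rewrite src_inv.
by apply: open_rng_image; apply: open_preimage_inv.
Qed.

Lemma open_bisection_nbhs g (X Y : set G) : open X -> open Y -> X (s g) -> Y (r g) ->
  exists B, [/\ open_bisection B, B g & B `<=` s @^-1` X `&` r @^-1` Y].
Proof.
move=> oX oY Xg Yg.
have [U [oU Ug iU _]] := rng_chart g; have [V [oV Vg iV _]] := rng_chart (inv g).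
exists (U `&` inv @^-1` V `&` (s @^-1` X `&` r @^-1` Y)).
split; [split | by [] | by move=> t []].
- apply: openI; first by apply: openI => //; apply: open_preimage_inv.
  by apply: openI; [apply: open_preimage_src | apply: open_preimage_rng].
- move=> x y [[_ Vx] _] [[_ Vy] _] sxy; rewrite -(invK x) -(invK y).
  by congr inv; apply: iV => //; rewrite !rng_inv.
- by move=> x y [[Ux _] _] [[Uy _] _]; apply: iU.
Qed.

Definition src_section (B : set G) (y : G) : G := xget y [set b | B b /\ s b = y].

Lemma src_sectionP B y : (s @` B) y -> B (src_section B y) /\ s (src_section B y) = y.
Proof.
by case=> b Bb sb; apply: (xgetPex y (P := [set b | B b /\ s b = y])); exists b.
Qed.

Lemma src_section_src B b : inj_on B s -> B b -> src_section B (s b) = b.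
Proof.
move=> iB Bb; have [Bc sc] : B (src_section B (s b)) /\ s (src_section B (s b)) = s b.
  by apply: src_sectionP; exists b.
exact: iB.
Qed.

Lemma continuous_src_section B D : open B -> inj_on B s -> D `<=` s @` B ->
  {within D, continuous (src_section B)}.
Proof.
move=> oB iB DB; apply/subspace_continuousP => y Dy N.
rewrite nbhsE => -[M [oM My] MN].
have [By sy] := src_sectionP (DB _ Dy).
have yMB : open_nbhs y (s @` (M `&` B)).
  by split; [apply: open_src_image; apply: openI | exists (src_section B y)].
apply: filterS (open_nbhs_nbhs yMB) => _ [b [Mb Bb] <-] Dsb.
by apply: MN; rewrite /from_subspace src_section_src.
Qed.

Lemma compact_open_bisection_nbhs g (X Y : set G) :
  open X -> open Y -> X (s g) -> Y (r g) ->
  exists V, [/\ compact_open_bisection V, V g & V `<=` s @^-1` X `&` r @^-1` Y].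
Proof.
move=> oX oY Xg Yg; have [B [[oB iS iR] Bg BXY]] := open_bisection_nbhs oX oY Xg Yg.
have sBg : (s @` B) (s g) by exists g.
case: Hample => _ _ /(_ _ _ (unit_src g) (open_src_image oB) sBg).
move=> [D [_ /relopen_unit_space_open oD cD Dg DB]].
exists (B `&` s @^-1` D); split=> //; last by move=> b [/BXY].
split; first split.
- by apply: openI => //; apply: open_preimage_src.
- exact: inj_onS iS.
- exact: inj_onS iR.
have -> : B `&` s @^-1` D = src_section B @` D.
  apply/seteqP; split=> [b [Bb Dsb]|_ [y Dy <-]].
  - by exists (s b) => //; apply: src_section_src.
  - by have [? sy] := src_sectionP (DB _ Dy); split; rewrite //= sy.
exact: continuous_compact (continuous_src_section oB iS DB) cD.
Qed.

Lemma open_unit_space_setD_compact K : compact K -> K `<=` G0 -> open (G0 `\` K).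
Proof.
move=> cK KG; apply: open_from_nbhs => z [Gz nKz].
have [N zN NK] : exists2 N, open_nbhs z N & N `<=` ~` K.
  apply: contrapT => noN.
  have zK : closure K z.
    move=> B; rewrite nbhsE => -[N zN NB]; apply: contrapT => KB0.
    by apply: noN; exists N => // t Nt Kt; apply: KB0; exists t; split=> //; apply: NB.
  have [k [Kk clk]] := cK _ (within_nbhs_proper zK) (withinT _ _).
  have zk : z <> k by move=> e; apply: nKz; rewrite e.
  case: Hample => _ /(_ z k Gz (KG _ Kk) zk) [U [V [oU oV Uz Vk UV0]]] _.
  have KU : within K (nbhs z) (U `&` K).
    by apply: filterS (open_nbhs_nbhs (conj oU Uz)) => t Ut Kt.
  have [t [[Ut Kt] Vt]] := clk _ _ KU (open_nbhs_nbhs (conj oV Vk)).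
  exact: units_disjoint_notin UV0 Ut Vt (KG _ Kt).
exists (N `&` G0).
  by case: zN => oN Nz; split=> //; apply: openI => //; apply: unit_space_open.
by move=> t [Nt Gt]; split=> //; apply: NK.
Qed.

Definition pi_fun (U : set G) (z : G) : G :=
  if pselect (G0 z) then r (src_section U z) else z.

Lemma pi_funP U : full_bisection mul inv U -> Defs.pi_of mul inv U (pi_fun U).
Proof.
move=> /full_bisectionP [_ sU _] z; rewrite /pi_fun.
case: pselect => [Gz|nGz]; split=> // _.
have [Uu su] : U (src_section U z) /\ s (src_section U z) = z.
  by apply: src_sectionP; rewrite sU.
by exists (src_section U z).
Qed.

Lemma pi_of_involutive U a : full_bisection mul inv U ->
  (forall u, U u -> U (inv u)) -> Defs.pi_of mul inv U a -> involutive a.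
Proof.
move=> /full_bisectionP [[_ iS _] _ _] Uinv pa z.
have [Gz|nGz] := pselect (G0 z); last by have [_ /(_ nGz) az] := pa z; rewrite !az.
have [/(_ Gz) [u [Uu suz ->]] _] := pa z.
have [/(_ (unit_rng u)) [v [Uv svu ->]] _] := pa (r u).
have -> : v = inv u by apply: iS => //; [apply: Uinv | rewrite src_inv].
by rewrite rng_inv.
Qed.

Definition bisection_mul (U V : set G) : set G :=
  [set w | exists u v, [/\ U u, V v, s u = r v & w = mul u v]].

Lemma pi_of_mul U V f h : Defs.pi_of mul inv U f -> Defs.pi_of mul inv V h ->
  Defs.pi_of mul inv (bisection_mul U V) (f \o h).
Proof.
move=> pf ph z; split=> Gz /=.
- have [/(_ Gz) [v [Vv svz ->]] _] := ph z.
  have [/(_ (unit_rng v)) [u [Uu sur ->]] _] := pf (r v).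
  have cuv : comp u v by apply/compP.
  by exists (mul u v); rewrite src_mul // rng_mul //; split=> //; exists u, v.
- by have [_ /(_ Gz) ->] := ph z; have [_ /(_ Gz) ->] := pf z.
Qed.

Lemma open_bisection_mul U V : open U -> open V -> open (bisection_mul U V).
Proof.
move=> oU oV; apply: open_from_nbhs => _ [u0 [v0 [Uu0 Vv0 e0 ->]]].
have c0 : comp u0 v0 by apply/compP.
have c : comp (mul u0 v0) (inv v0) by apply/compP; rewrite rng_inv src_mul.
have Uw : U (mul (mul u0 v0) (inv v0)) by rewrite mulgK.
have [P [Q [oP oQ Pw Qv PQU]]] := mul_nbhs c oU Uw.
pose M := s @` (V `&` inv @^-1` Q).
have oM : open M by apply: open_src_image; apply: openI => //; apply: open_preimage_inv.
exists (P `&` s @^-1` M).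
  split; first by apply: openI => //; apply: open_preimage_src.
  by split=> //; exists v0; rewrite ?src_mul.
move=> w [Pw' [v [Vv Qv'] svw]].
have cw : comp w (inv v) by apply/compP; rewrite rng_inv.
exists (mul w (inv v)), v; split=> //.
- exact: PQU.
- by rewrite src_mul // src_inv.
- by rewrite mulgVK.
Qed.

Lemma full_bisection_mul U V : full_bisection mul inv U -> full_bisection mul inv V ->
  full_bisection mul inv (bisection_mul U V).
Proof.
move=> /full_bisectionP [[oU iSU iRU] sU rU] /full_bisectionP [[oV iSV iRV] sV rV].
apply/full_bisectionP; split; first split.
- exact: open_bisection_mul.
- move=> _ _ [u1 [v1 [Uu1 Vv1 e1 ->]]] [u2 [v2 [Uu2 Vv2 e2 ->]]].
  rewrite !src_mul; try by apply/compP.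
  move=> /(iSV _ _ Vv1 Vv2) v12; subst v2.
  by congr mul; apply: iSU => //; rewrite e1 e2.
- move=> _ _ [u1 [v1 [Uu1 Vv1 e1 ->]]] [u2 [v2 [Uu2 Vv2 e2 ->]]].
  rewrite !rng_mul; try by apply/compP.
  move=> /(iRU _ _ Uu1 Uu2) u12; subst u2.
  by congr mul; apply: iRV => //; rewrite -e1 -e2.
- apply/seteqP; split=> [_ [w _ <-]|z]; first exact: unit_src.
  rewrite -sV => -[v Vv <-]; have := unit_rng v.
  rewrite -sU => -[u Uu suv]; exists (mul u v); first by exists u, v.
  by rewrite src_mul //; apply/compP.
- apply/seteqP; split=> [_ [w _ <-]|z]; first exact: unit_rng.
  rewrite -rU => -[u Uu <-]; have := unit_src u.
  rewrite -rV => -[v Vv rvu]; exists (mul u v); first by exists u, v.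
  by rewrite rng_mul //; apply/compP.
Qed.

Lemma compact_support_comp f h : compact (Defs.support mul inv f) ->
  compact (Defs.support mul inv h) -> compact (Defs.support mul inv (f \o h)).
Proof.
move=> cf ch.
have -> : Defs.support mul inv (f \o h) = (Defs.support mul inv f `|`
    Defs.support mul inv h) `&` closure [set x | G0 x /\ f (h x) <> x].
  apply/seteqP; split=> [x [cx Gx]|x [[[_ Gx]|[_ Gx]] cx] //]; split=> //.
  have : closure ([set x | G0 x /\ f x <> x] `|` [set x | G0 x /\ h x <> x]) x.
    apply: closureS cx => t [Gt moved].
    have [hty|] := pselect (h t = t); last by right.
    by left; split=> //; rewrite -{1}hty.
  by rewrite closureU => -[?|?]; [left | right].
by apply: compact_closedI; [apply: compactU | apply: closed_closure].
Qed.

Lemma full_group_comp a b : full_group mul inv a -> full_group mul inv b ->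
  full_group mul inv (a \o b).
Proof.
move=> [U [fU pa ca]] [V [fV pb cb]]; exists (bisection_mul U V); split.
- exact: full_bisection_mul.
- exact: pi_of_mul.
- exact: compact_support_comp.
Qed.

Lemma derived_comp (Gam : set (G -> G)) a b :
  derived Gam a -> derived Gam b -> derived Gam (a \o b).
Proof.
move=> da db H GamH H1 HM HV.
exact: HM (da H GamH H1 HM HV) (db H GamH H1 HM HV).
Qed.

Lemma derived_commutator (Gam : set (G -> G)) a b : Gam a -> Gam b ->
  involutive a -> involutive b -> derived Gam (a \o (b \o (a \o b))).
Proof. by move=> Ga Gb ia ib H GamH _ _ _; apply: GamH; exists a, b, a, b. Qed.

Definition transposition (V : set G) : set G :=
  V `|` inv @^-1` V `|` (G0 `\` (s @` V `|` r @` V)).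

Section Transposition.
Variable V : set G.
Hypotheses (cV : compact_open_bisection V) (dV : s @` V `<=` ~` (r @` V)).

Lemma compact_src_rng_images : compact (s @` V `|` r @` V).
Proof.
by case: cV => _ cVc; apply: compactU; [apply: compact_src_image | apply: compact_rng_image].
Qed.

Lemma src_rng_images_units : s @` V `|` r @` V `<=` G0.
Proof. by move=> _ [[v _ <-]|[v _ <-]]; [apply: unit_src | apply: unit_rng]. Qed.

Lemma open_units_outside_images : open (G0 `\` (s @` V `|` r @` V)).
Proof.
exact: open_unit_space_setD_compact compact_src_rng_images src_rng_images_units.
Qed.

Lemma transposition_inv u : transposition V u -> transposition V (inv u).
Proof.
case=> [[Vu|Vu]|[Gu Ku]]; first by left; right; rewrite /= invK.
- by left; left.
- by rewrite inv_unit //; right.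
Qed.

Lemma transposition_src_inj : inj_on (transposition V) s.
Proof.
have [[_ iS iR] _] := cV.
have iSinv : inj_on (inv @^-1` V) s.
  move=> x y Vx Vy; rewrite -!rng_inv => /(iR _ _ Vx Vy) e.
  by rewrite -(invK x) e invK.
apply: inj_on_setU; first apply: inj_on_setU => //.
- move=> x y Vx Vy sxy; have sVx : (s @` V) (s x) by exists x.
  by apply: (dV sVx); rewrite sxy -rng_inv; exists (inv y).
- by move=> x y [Gx _] [Gy _]; rewrite !src_unit.
- move=> x y Vx [Gy Ky] sxy; apply: Ky; rewrite -(src_unit Gy) -sxy.
  by case: Vx => Vx; [left; exists x | right; exists (inv x); rewrite ?rng_inv].
Qed.

Lemma transposition_src_image : s @` transposition V = G0.
Proof.
apply/seteqP; split=> [_ [u _ <-]|z Gz]; first exact: unit_src.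
have [[[v Vv <-]|[v Vv <-]]|nKz] := pselect ((s @` V `|` r @` V) z).
- by exists v => //; left; left.
- by exists (inv v); [left; right; rewrite /= invK | rewrite src_inv].
- by exists z; [right | rewrite src_unit].
Qed.

Lemma full_bisection_transposition : full_bisection mul inv (transposition V).
Proof.
have [[oV _ _] _] := cV.
apply: full_bisection_inv_closed.
- apply: openU; last exact: open_units_outside_images.
  by apply: openU => //; apply: open_preimage_inv.
- exact: transposition_src_inj.
- exact: transposition_src_image.
- exact: transposition_inv.
Qed.

Lemma transposition_involutive : involutive (pi_fun (transposition V)).
Proof.
apply: pi_of_involutive full_bisection_transposition transposition_inv _.
exact: pi_funP full_bisection_transposition.
Qed.

Lemma compact_support_transposition :
  compact (Defs.support mul inv (pi_fun (transposition V))).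
Proof.
have fT := full_bisection_transposition.
have /full_bisectionP [[_ iS _] _ _] := fT.
have moved_images z : G0 z -> pi_fun (transposition V) z <> z -> (s @` V `|` r @` V) z.
  move=> Gz; apply: contra_notP => nKz.
  have [/(_ Gz) [u [Tu suz ->]] _] := pi_funP fT z.
  have -> : u = z by apply: iS; rewrite ?suz ?src_unit //; right.
  exact: rng_unit.
have -> : Defs.support mul inv (pi_fun (transposition V)) = (s @` V `|` r @` V) `&`
    closure [set x | G0 x /\ pi_fun (transposition V) x <> x].
  apply/seteqP; split=> [x [cx Gx]|x [Kx cx]]; split=> //; last first.
    exact: src_rng_images_units.
  apply: contrapT => nKx.
  have [t [[Gt movt] [_ nKt]]] :=
    cx _ (open_nbhs_nbhs (conj open_units_outside_images (conj Gx nKx))).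
  exact/nKt/moved_images.
by apply: compact_closedI; [exact: compact_src_rng_images | exact: closed_closure].
Qed.

Lemma full_group_transposition : full_group mul inv (pi_fun (transposition V)).
Proof.
exists (transposition V); split.
- exact: full_bisection_transposition.
- exact: pi_funP full_bisection_transposition.
- exact: compact_support_transposition.
Qed.

End Transposition.

Lemma src_rng_images_disjoint V X Y : X `&` Y `&` G0 = set0 ->
  V `<=` s @^-1` X `&` r @^-1` Y -> s @` V `<=` ~` (r @` V).
Proof.
move=> XY0 VXY _ [v Vv <-] [w Vw rwsv].
apply: (units_disjoint_notin XY0 (VXY _ Vv).1 _ (unit_src v)).
by rewrite -rwsv; exact: (VXY _ Vw).2.
Qed.

Lemma separated_units3 x y z : G0 x -> G0 y -> G0 z -> x <> y -> x <> z -> y <> z ->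
  exists X Y Z, [/\ [/\ open X, open Y & open Z], [/\ X x, Y y & Z z] &
    [/\ X `&` Y `&` G0 = set0, X `&` Z `&` G0 = set0 & Y `&` Z `&` G0 = set0]].
Proof.
move=> Gx Gy Gz nxy nxz nyz; case: Hample => _ haus _.
have [P1 [Q1 [oP1 oQ1 P1x Q1y PQ1]]] := haus _ _ Gx Gy nxy.
have [P2 [R2 [oP2 oR2 P2x R2z PR2]]] := haus _ _ Gx Gz nxz.
have [Q3 [R3 [oQ3 oR3 Q3y R3z QR3]]] := haus _ _ Gy Gz nyz.
exists (P1 `&` P2), (Q1 `&` Q3), (R2 `&` R3); split.
- by split; apply: openI.
- by [].
- split.
  + by apply: (units_disjointS _ _ PQ1) => t [].
  + by apply: (units_disjointS _ _ PR2) => t [].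
  + by apply: (units_disjointS _ _ QR3) => t [].
Qed.

Definition covered (Gam : set (G -> G)) (g : G) : Prop :=
  exists U f, [/\ full_bisection mul inv U, U g, Defs.pi_of mul inv U f & Gam f].

Lemma nonisotropic_covered_full_group g : s g <> r g -> covered (full_group mul inv) g.
Proof.
move=> sgrg; case: Hample => _ haus _.
have [X [Y [oX oY Xg Yg XY0]]] := haus _ _ (unit_src g) (unit_rng g) sgrg.
have [V [cV Vg VXY]] := compact_open_bisection_nbhs oX oY Xg Yg.
have dV := src_rng_images_disjoint XY0 VXY.
have fT := full_bisection_transposition cV dV.
exists (transposition V), (pi_fun (transposition V)); split=> //.
- by left; left.
- exact: pi_funP.
- exact: full_group_transposition.
Qed.

(* The witness is [g = g k^-1 r(k) k], whose factors lie in [transposition V],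
   [transposition W], [transposition V] and [transposition W]. *)
Lemma transposition_commutator_covered g k V W :
  compact_open_bisection V -> compact_open_bisection W ->
  s @` V `<=` ~` (r @` V) -> s @` W `<=` ~` (r @` W) ->
  V g -> W k -> s k = s g -> transposition V (r k) ->
  covered (derived (full_group mul inv)) g.
Proof.
move=> cV cW dV dW Vg Wk skg TVrk.
have fTV := full_bisection_transposition cV dV.
have fTW := full_bisection_transposition cW dW.
have pa := pi_funP fTV; have pb := pi_funP fTW.
pose a := pi_fun (transposition V); pose b := pi_fun (transposition W).
exists (bisection_mul (transposition V) (bisection_mul (transposition W)
  (bisection_mul (transposition V) (transposition W)))), (a \o (b \o (a \o b))).
split.
- exact: full_bisection_mul fTV (full_bisection_mul fTW (full_bisection_mul fTV fTW)).
- exists g, (mul (inv k) (mul (r k) k)); split.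
  + by left; left.
  + exists (inv k), (mul (r k) k); split.
    * by left; right; rewrite /= invK.
    * by exists (r k), k; split=> //; [left; left | apply/src_unit/unit_rng].
    * by rewrite src_inv mul_rngl.
    * by [].
  + by rewrite mul_rngl -/(src mul inv k) rng_src skg.
  + by rewrite mul_rngl -/(src mul inv k) skg mul_srcr.
- exact: pi_of_mul pa (pi_of_mul pb (pi_of_mul pa pb)).
- apply: derived_commutator; try exact: full_group_transposition.
  + exact: transposition_involutive cV dV.
  + exact: transposition_involutive cW dW.
Qed.

Lemma nonisotropic_covered_derived g k : s g <> r g -> s k = s g ->
  r k <> s g -> r k <> r g -> covered (derived (full_group mul inv)) g.
Proof.
move=> sgrg skg rksg rkrg.
have [X [Y [Z [[oX oY oZ] [Xg Yg Zk] [XY XZ YZ]]]]] := separated_units3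
  (unit_src g) (unit_rng g) (unit_rng k) sgrg (nesym rksg) (nesym rkrg).
have Xk : X (s k) by rewrite skg.
have [V [cV Vg VXY]] := compact_open_bisection_nbhs oX oY Xg Yg.
have [W [cW Wk WXZ]] := compact_open_bisection_nbhs oX oZ Xk Zk.
apply: (transposition_commutator_covered cV cW _ _ Vg Wk skg).
- exact: src_rng_images_disjoint XY VXY.
- exact: src_rng_images_disjoint XZ WXZ.
- right; split; first exact: unit_rng.
  case=> -[v Vv vk].
  + by apply: (units_disjoint_notin XZ (VXY _ Vv).1 _ (unit_src v)); rewrite vk.
  + by apply: (units_disjoint_notin YZ (VXY _ Vv).2 _ (unit_rng v)); rewrite vk.
Qed.

Lemma orbit_moved x y1 y2 : gorbit mul inv x y1 -> gorbit mul inv x y2 -> y1 <> y2 ->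
  exists h, s h = x /\ r h <> x.
Proof.
move=> [h1 [s1 r1]] [h2 [s2 r2]] n12.
have [y1x|] := pselect (y1 = x); last by exists h1; rewrite r1.
by exists h2; split=> //; rewrite r2 -y1x; apply: nesym.
Qed.

Lemma orbit_avoid2 x y z y1 y2 y3 :
  gorbit mul inv x y1 -> gorbit mul inv x y2 -> gorbit mul inv x y3 ->
  y1 <> y2 -> y1 <> y3 -> y2 <> y3 -> exists h, [/\ s h = x, r h <> y & r h <> z].
Proof.
move=> [h1 [s1 <-]] [h2 [s2 <-]] [h3 [s3 <-]] n12 n13 n23.
by case: (distinct3_avoid2 y z n12 n13 n23) => -[]; [exists h1 | exists h2 | exists h3].
Qed.

Lemma nonisotropic_covered_derived_orbit3 :
  (forall x, G0 x -> exists y1 y2 y3,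
     [/\ gorbit mul inv x y1, gorbit mul inv x y2 & gorbit mul inv x y3] /\
     [/\ y1 <> y2, y1 <> y3 & y2 <> y3]) ->
  forall g, s g <> r g -> covered (derived (full_group mul inv)) g.
Proof.
move=> orbit g sgrg.
have [y1 [y2 [y3 [[o1 o2 o3] [n12 n13 n23]]]]] := orbit _ (unit_src g).
have [h [shg rhsg rhrg]] := orbit_avoid2 (s g) (r g) o1 o2 o3 n12 n13 n23.
exact: nonisotropic_covered_derived sgrg shg rhsg rhrg.
Qed.

Lemma covered_mul Gam g h : (forall a b, Gam a -> Gam b -> Gam (a \o b)) ->
  covered Gam g -> covered Gam h -> comp g h -> covered Gam (mul g h).
Proof.
move=> Gam_comp [U [f [fU Ug pf Gf]]] [V [k [fV Vh pk Gk]]] cgh.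
exists (bisection_mul U V), (f \o k); split.
- exact: full_bisection_mul.
- by exists g, h; split=> //; apply/compP.
- exact: pi_of_mul.
- exact: Gam_comp.
Qed.

Lemma covers_of_nonisotropic Gam : (forall a b, Gam a -> Gam b -> Gam (a \o b)) ->
  (forall g, s g <> r g -> covered Gam g) ->
  (forall x, G0 x -> exists h, s h = x /\ r h <> x) -> covers mul inv Gam.
Proof.
move=> Gam_comp nonisoP moved g.
have [iso_g|] := pselect (s g = r g); last exact: nonisoP.
have [h [shg rhg]] := moved _ (unit_src g).
have [n1 n2 c <-] := isotropic_factorization iso_g shg rhg.
by apply: covered_mul => //; apply: nonisoP.
Qed.

End TopologicalGroupoid.

Theorem lemma4p8 (G : topologicalType) (comp : G -> G -> Prop)
    (mul : G -> G -> G) (inv : G -> G)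
    (HG : is_topological_groupoid comp mul inv)
    (Hample : ample mul inv) (Heff : effective mul inv) :
  ((forall x, unit_space mul inv x ->
      exists y1 y2, [/\ gorbit mul inv x y1, gorbit mul inv x y2 & y1 <> y2]) ->
    covers mul inv (full_group mul inv)) /\
  ((forall x, unit_space mul inv x ->
      exists y1 y2 y3,
        [/\ gorbit mul inv x y1, gorbit mul inv x y2 & gorbit mul inv x y3] /\
        [/\ y1 <> y2, y1 <> y3 & y2 <> y3]) ->
    covers mul inv (derived (full_group mul inv))).
Proof.
have cover := covers_of_nonisotropic HG Hample.
split=> orbit; apply: cover.
- exact: full_group_comp HG Hample.
- exact: nonisotropic_covered_full_group HG Hample.
- by move=> x /orbit [y1 [y2 [o1 o2 n12]]]; apply: orbit_moved o1 o2 n12.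
- exact: derived_comp.
- exact: nonisotropic_covered_derived_orbit3 HG Hample orbit.
- by move=> x /orbit [y1 [y2 [_ [[o1 o2 _] [n12 _ _]]]]]; apply: orbit_moved o1 o2 n12.
Qed.
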